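(* Let $G$ be a very well-covered graph with $2n$ vertices, $K$ a field and $S=K[x_v : v\in V(G)]$. Then $\dim(S/NI(G))\geq n$. If moreover $G$ is well-dominated, then $\dim(S/NI(G))=n$.
   Context: $G$ is very well-covered if it has no isolated vertices and every maximal independent set has exactly $|V(G)|/2$ elements. $N_G[v]$ is the closed neighborhood of $v$ and $NI(G)=\big(\prod_{w\in N_G[v]} x_w : v\in V(G)\big)$ is the closed neighborhood ideal. A dominating set is a set of vertices meeting every closed neighborhood; $G$ is well-dominated if all its minimal (with respect to inclusion) dominating sets have the same cardinality. $K$ is an infinite field. *)

From HB Require Import structures.
From mathcomp Require Import all_boot all_order all_algebra.
From mathcomp Require Export mpoly.
Set Implicit Arguments. Unset Strict Implicit. Unset Printing Implicit Defensive.
Import GRing.Theory.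
Local Open Scope ring_scope.

Definition simple_graph (T : finType) (e : rel T) : Prop :=
  ssrbool.symmetric e /\ ssrbool.irreflexive e.

Definition cnbhd (T : finType) (e : rel T) (v : T) : {set T} :=
  [set w | (w == v) || e v w].

Definition independent (T : finType) (e : rel T) (A : {set T}) : Prop :=
  forall x y, x \in A -> y \in A -> ~~ e x y.

Definition maximal_independent (T : finType) (e : rel T) (A : {set T}) : Prop :=
  independent e A /\ forall B : {set T}, A \proper B -> ~ independent e B.

Definition no_isolated (T : finType) (e : rel T) : Prop :=
  forall v, exists w, e v w.

Definition very_well_covered (T : finType) (e : rel T) : Prop :=
  no_isolated e /\
  forall A : {set T}, maximal_independent e A -> (#|A| * 2 = #|T|)%N.

Definition dominating (T : finType) (e : rel T) (D : {set T}) : Prop :=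
  forall v, D :&: cnbhd e v != set0.

Definition minimal_dominating (T : finType) (e : rel T) (D : {set T}) : Prop :=
  dominating e D /\ forall D' : {set T}, D' \proper D -> ~ dominating e D'.

Definition well_dominated (T : finType) (e : rel T) : Prop :=
  forall D1 D2 : {set T}, minimal_dominating e D1 -> minimal_dominating e D2 ->
    #|D1| = #|D2|.

Definition infinite_field (K : fieldType) : Prop :=
  forall s : seq K, exists x : K, x \notin s.

Definition vvar (K : fieldType) (T : finType) (v : T) : {mpoly K[#|T|]} :=
  'X_(enum_rank v).

Definition cnbhd_monomial (K : fieldType) (T : finType) (e : rel T) (v : T)
  : {mpoly K[#|T|]} :=
  \prod_(w in cnbhd e v) vvar K w.

Definition pset (R : comRingType) := R -> Prop.

Definition NI (K : fieldType) (T : finType) (e : rel T) : pset {mpoly K[#|T|]} :=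
  fun p => exists c : T -> {mpoly K[#|T|]},
    p = \sum_(v : T) c v * cnbhd_monomial K e v.

Definition is_ideal (R : comRingType) (I : pset R) : Prop :=
  [/\ I 0, (forall a b, I a -> I b -> I (a + b)) & (forall r a, I a -> I (r * a))].

Definition is_prime_ideal (R : comRingType) (P : pset R) : Prop :=
  [/\ is_ideal P, ~ P 1 & forall a b, P (a * b) -> P a \/ P b].

Definition strict_subset (R : comRingType) (A B : pset R) : Prop :=
  (forall p, A p -> B p) /\ exists p, B p /\ ~ A p.

(* a chain P_0 < P_1 < ... < P_k of prime ideals of R containing I, i.e. a chain
   of prime ideals of length k in R/I *)
Definition prime_chain_over (R : comRingType) (I : pset R) (k : nat)
  (c : nat -> pset R) : Prop :=
  (forall i, (i <= k)%N -> is_prime_ideal (c i) /\ forall p, I p -> c i p) /\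
  (forall i, (i < k)%N -> strict_subset (c i) (c i.+1)).

Definition krull_dim_quot_ge (R : comRingType) (I : pset R) (d : nat) : Prop :=
  exists c, prime_chain_over I d c.

Definition krull_dim_quot_eq (R : comRingType) (I : pset R) (d : nat) : Prop :=
  krull_dim_quot_ge I d /\ forall k c, prime_chain_over I k c -> (k <= d)%N.

Arguments NI K [T] e _.

From mathcomp Require Import all_boot all_order all_algebra.
From mathcomp Require Import mpoly.
From mathcomp Require Import zify.
From Stdlib Require Import ClassicalEpsilon.
Set Implicit Arguments. Unset Strict Implicit. Unset Printing Implicit Defensive.
Import GRing.Theory.
Local Open Scope ring_scope.

(* A maximal independent set I is a minimal dominating set, of size n.  The
   monomial primes (x_v : v in I) ⊂ (x_v : v in I ∪ {s_1}) ⊂ ... obtained by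
   adding the n vertices s_j outside I one at a time all contain NI(G), giving
   a chain of length n.  Conversely, the first prime P_0 of any chain over NI(G)
   contains x_w for every w of a dominating set D, and |D| >= n when G is
   well-dominated.  Modulo P_0 at most t^(2n - |D|) polynomials of size <= t are
   linearly independent, and each strict step P_i ⊂ P_(i+1), witnessed by f,
   multiplies that count by t at the cost of a constant factor on the size
   (multiply a family independent modulo P_i by powers of f).  Hence
   t^k <= B t^(2n - |D|) for all t, so k <= n. *)

Lemma prime_ideal_ideal (R : comNzRingType) (P : pset R) : is_prime_ideal P -> is_ideal P.
Proof. by case. Qed.

Lemma prime_ideal_prod (R : comNzRingType) (P : pset R) (I : eqType) (s : seq I)
    (F : I -> R) :
  is_prime_ideal P -> P (\prod_(x <- s) F x) -> exists2 x, x \in s & P (F x).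
Proof.
case=> _ P1 Pp; elim: s => [|x s IH]; first by rewrite big_nil.
rewrite big_cons => /Pp [Px|/IH [y ys Py]]; first by exists x; rewrite ?mem_head.
by exists y; rewrite // inE ys orbT.
Qed.

Lemma mpolyX_neq0 (K : fieldType) N (i : 'I_N) : ('X_i : {mpoly K[N]}) != 0.
Proof.
apply/eqP => h; have := mcoeffXU K i i; rewrite h eqxx raddf0 => /eqP.
by rewrite eq_sym oner_eq0.
Qed.

Section VarIdeal.
Variables (K : fieldType) (N : nat).
Local Notation S := {mpoly K[N]}.

Definition subst0 (A : {set 'I_N}) (p : S) : S :=
  p \mPo [tuple if i \in A then 0 else 'X_i | i < N].

Definition mnm_avoids (A : {set 'I_N}) (m : 'X_{1..N}) := [forall i in A, m i == 0%N].

(* The monomial prime ideal (x_i : i in A), as the kernel of x_i |-> 0, i in A. *)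
Definition var_ideal (A : {set 'I_N}) : pset S := fun p => subst0 A p = 0.

Lemma subst0_mpolyX A m : subst0 A 'X_[m] = if mnm_avoids A m then 'X_[m] else 0.
Proof.
rewrite /subst0 comp_mpolyX; case: ifP => [/forall_inP av | /negbT].
  rewrite mpolyXE_id; apply: eq_bigr => i _; rewrite tnth_mktuple.
  by case: ifP => // iA; rewrite (eqP (av i iA)) !expr0.
rewrite negb_forall_in => /exists_inP [i iA mi].
by rewrite (bigD1 i) //= tnth_mktuple iA expr0n (negbTE mi) mul0r.
Qed.

Lemma mcoeff_subst0 A p m : (subst0 A p)@_m = if mnm_avoids A m then p@_m else 0.
Proof.
elim/mpolyind: p => [|c m' p _ _ IH]; first by rewrite /subst0 !raddf0 if_same.
rewrite /subst0 raddfD /= comp_mpolyZ -/(subst0 A 'X_[m']) -/(subst0 A p).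
rewrite subst0_mpolyX mcoeffD mcoeffZ IH mcoeffD mcoeffZ.
rewrite (fun_if (mcoeff m)) mcoeff0 mcoeffX.
case: (eqVneq m' m) => [->|ne]; first by case: ifP; rewrite ?mulr0 ?add0r.
by case: (mnm_avoids A m'); rewrite /= ?mulr0 ?add0r.
Qed.

Lemma subst0_X A i : subst0 A 'X_i = if i \in A then 0 else 'X_i.
Proof. by rewrite /subst0 comp_mpolyXU -tnth_nth tnth_mktuple. Qed.

Lemma var_ideal_prime A : is_prime_ideal (var_ideal A).
Proof.
rewrite /var_ideal /subst0; split.
- split=> [|a b ha hb|r a ha]; first by rewrite raddf0.
    by rewrite raddfD /= ha hb addr0.
  by rewrite rmorphM /= ha mulr0.
- by rewrite rmorph1; apply/eqP; rewrite oner_eq0.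
- by move=> a b; rewrite rmorphM /= => /eqP; rewrite mulf_eq0 => /orP [] /eqP; auto.
Qed.

Section IdealOverVars.
Variables (P : pset S) (A : {set 'I_N}).
Hypotheses (P_ideal : is_ideal P) (P_vars : forall i, i \in A -> P 'X_i).

Lemma ideal_mpolyX m : ~~ mnm_avoids A m -> P 'X_[m].
Proof.
case: P_ideal => _ _ PM; rewrite negb_forall_in => /exists_inP [i iA mi].
rewrite mpolyXE_id (bigD1 i) //=; case: (m i) mi => [|k] // _.
by rewrite exprS -mulrA mulrC; apply: PM; apply: P_vars.
Qed.

Lemma ideal_subr_subst0 p : P (p - subst0 A p).
Proof.
case: P_ideal => P0 PD PM.
elim/mpolyind: p => [|c m p _ _ IH]; first by rewrite /subst0 raddf0 subr0.
have -> : c *: 'X_[m] + p - subst0 A (c *: 'X_[m] + p) =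
    c%:MP * ('X_[m] - subst0 A 'X_[m]) + (p - subst0 A p).
  by rewrite /subst0 raddfD /= comp_mpolyZ mul_mpolyC scalerBr opprD addrACA.
apply: PD => //; apply: PM; rewrite subst0_mpolyX.
by case: ifP => [_|/negbT av]; rewrite ?subrr ?subr0 //; apply: ideal_mpolyX.
Qed.

Lemma var_ideal_sub p : var_ideal A p -> P p.
Proof. by move=> pA; have := ideal_subr_subst0 p; rewrite pA subr0. Qed.

End IdealOverVars.

Lemma var_ideal_subset (A B : {set 'I_N}) p :
  A \subset B -> var_ideal A p -> var_ideal B p.
Proof.
move=> AB; apply: var_ideal_sub => [|i /(subsetP AB) iB].
  exact/prime_ideal_ideal/var_ideal_prime.
by rewrite /var_ideal subst0_X iB.
Qed.

Lemma var_ideal_proper (A B : {set 'I_N}) :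
  A \proper B -> strict_subset (var_ideal A) (var_ideal B).
Proof.
case/properP => AB [i iB iA]; split=> [p|]; first exact: var_ideal_subset.
exists 'X_i; rewrite /var_ideal !subst0_X iB (negbTE iA).
by split=> // /eqP; apply/negP; apply: mpolyX_neq0.
Qed.

End VarIdeal.

Lemma free_family_le_card (K : fieldType) (C : finType) (m : nat) (a : nat -> C -> K) :
  (forall c : nat -> K, (forall x, \sum_(i < m) c i * a i x = 0) ->
      forall i, (i < m)%N -> c i = 0) -> (m <= #|C|)%N.
Proof.
move=> free_a; pose M : 'M[K]_(m, #|C|) := \matrix_(i, j) a i (enum_val j).
suff : row_free M by rewrite /row_free => /eqP <-; apply: rank_leq_col.
rewrite -kermx_eq0; apply/eqP/matrixP => i j; rewrite [RHS]mxE.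
pose r := row i (kermx M).
have rM0 : r *m M = 0 by rewrite -row_mul mulmx_ker row0.
pose c k := if @insub _ (fun k => (k < m)%N) 'I_m k is Some k' then r 0 k' else 0.
have cE (k : 'I_m) : c k = r 0 k by rewrite /c valK.
have := free_a c _ j (ltn_ord j); rewrite cE mxE => -> // x.
move/matrixP: rM0 => /(_ 0 (enum_rank x)); rewrite !mxE => rM0x; rewrite -{}[RHS]rM0x.
by apply: eq_bigr => k _; rewrite cE /M !mxE enum_rankK.
Qed.

Section LinIndepMod.
Variables (K : fieldType) (N : nat).
Local Notation S := {mpoly K[N]}.

Definition lin_indep_mod (P : pset S) m (F : nat -> S) :=
  forall c : nat -> K, P (\sum_(i < m) c i *: F i) -> forall i, (i < m)%N -> c i = 0.

Lemma lin_indep_mod_one (P : pset S) : is_prime_ideal P -> lin_indep_mod P 1 (fun=> 1).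
Proof.
case=> [[_ _ PM] P1 _] a; rewrite big_ord1 => Pa j; rewrite ltnS leqn0 => /eqP ->.
apply/eqP/negPn/negP => a0; apply: P1.
by have := PM (a 0%N)^-1%:MP _ Pa; rewrite mul_mpolyC scalerA mulVf // scale1r.
Qed.

Variables (P Q : pset S) (f : S).
Hypotheses (P_prime : is_prime_ideal P) (Q_ideal : is_ideal Q).
Hypotheses (PQ : forall p, P p -> Q p) (Qf : Q f) (Pf : ~ P f).

Lemma lin_indep_mod_cat m l F G : lin_indep_mod Q m F -> lin_indep_mod P l G ->
  lin_indep_mod P (m + l) (fun j => if (j < m)%N then F j else f * G (j - m)%N).
Proof.
case: P_prime => [[_ _ PM] _ Pp]; case: Q_ideal => _ QD QM indF indG c.
rewrite big_split_ord /=.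
under eq_bigr => i _ do rewrite ltn_ord.
under [X in _ + X]eq_bigr => i _ do rewrite ltnNge leq_addr /= addKn.
set s1 := \sum_(i < m) _; set s2 := \sum_(i < l) _ => Ps.
have s2E : s2 = (\sum_(i < l) c (m + i)%N *: G i) * f.
  by rewrite mulr_suml; apply: eq_bigr => i _; rewrite -scalerAl mulrC.
have Qs1 : Q s1.
  rewrite -[s1](addrK s2) -mulN1r; apply: (QD); first exact: PQ.
  by apply: (QM); rewrite s2E; apply: QM.
have c1 := indF c Qs1.
have s1_0 : s1 = 0 by apply: big1 => i _; rewrite c1 // scale0r.
move: Ps; rewrite s1_0 add0r s2E => /Pp [/(indG (fun i => c (m + i)%N)) c2|//] i lti.
case: (ltnP i m) => [/c1 //|le].
by rewrite -(subnKC le); apply: c2; rewrite ltn_subLR.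
Qed.

Lemma msize_mul_le (p q : S) : (msize (p * q) <= (msize p).-1 + msize q)%N.
Proof.
have [->|p0] := eqVneq p 0; first by rewrite mul0r msize0.
have [->|q0] := eqVneq q 0; first by rewrite mulr0 msize0.
have : (0 < msize p)%N by rewrite lt0n msize_poly_eq0.
by rewrite msizeM //; case: (msize p).
Qed.

Lemma lin_indep_mod_iter m F t :
  lin_indep_mod Q m F -> (forall j, (j < m)%N -> (msize (F j) <= t)%N) ->
  forall s, exists G, lin_indep_mod P (s * m) G /\
    forall j, (j < s * m)%N -> (msize (G j) <= t + s * (msize f).-1)%N.
Proof.
move=> indF szF; elim=> [|s [G [indG szG]]].
  by exists F; split=> [c _ i|j]; rewrite mul0n.
exists (fun j => if (j < m)%N then F j else f * G (j - m)%N); split.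
  by rewrite mulSn; apply: lin_indep_mod_cat.
move=> j; rewrite mulSn => ltj; case: ifP => [/szF|jm].
  by move/leq_trans; apply; apply: leq_addr.
apply: leq_trans (msize_mul_le _ _) _.
have := szG (j - m)%N; rewrite ltn_subLR ?ltj; last by rewrite leqNgt jm.
move=> /(_ isT); rewrite mulSn; move: (msize f).-1 (msize (G (j - m)%N)) => a b; lia.
Qed.

End LinIndepMod.

Lemma mnm_le_mdeg N (mu : 'X_{1..N}) i : (mu i <= mdeg mu)%N.
Proof. by rewrite mdegE (bigD1 i) //= leq_addr. Qed.

(* The monomials of degree < t in each of the variables outside A span all
   polynomials of size <= t modulo (x_i : i in A). *)
Lemma lin_indep_mod_var_ideal_le (K : fieldType) N (P : pset {mpoly K[N]})
    (A : {set 'I_N}) m F t :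
  is_ideal P -> (forall i, i \in A -> P 'X_i) -> lin_indep_mod P m F ->
  (forall j, (j < m)%N -> (msize (F j) <= t)%N) -> (m <= t ^ #|~: A|)%N.
Proof.
move=> P_ideal PA indF szF.
pose X := {i : 'I_N | i \notin A}.
have cardX : #|{: X}| = #|~: A| by rewrite card_sig; apply: eq_card => i; rewrite !inE.
pose mon (g : {ffun X -> 'I_t}) : 'X_{1..N} :=
  [multinom (if @insub _ (fun i => i \notin A) X i is Some x then val (g x) else 0%N)
  | i < N].
rewrite -cardX -[t in (t ^ _)%N]card_ord -card_ffun.
apply: (@free_family_le_card K _ m (fun j g => (subst0 A (F j))@_(mon g))) => c hc.
apply: indF; apply: (var_ideal_sub P_ideal PA); rewrite /var_ideal /subst0 raddf_sum /=.
apply/mpolyP => mu; rewrite mcoeff0 raddf_sum /=.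
under eq_bigr => j _ do rewrite comp_mpolyZ mcoeffZ -/(subst0 A (F j)).
have [/andP [av /forallP lt]|] := boolP (mnm_avoids A mu && [forall i, (mu i < t)%N]).
  pose g := [ffun x : X => Ordinal (lt (val x))].
  suff -> : mu = mon g by apply: hc.
  apply/mnmP => i; rewrite mnmE; case: insubP => [x _ <-|]; first by rewrite ffunE.
  by rewrite negbK => iA; move/forall_inP: av => /(_ i iA) /eqP.
move=> big_mu; apply: big1 => j _; rewrite mcoeff_subst0.
case: ifP big_mu => av; rewrite ?mulr0 //= negb_forall => /existsP [i].
rewrite -leqNgt => lei.
have szmu : (msize (F j) <= mdeg mu)%N.
  by apply: leq_trans (szF j (ltn_ord j)) (leq_trans lei (mnm_le_mdeg _ _)).
by rewrite (memN_msupp_eq0 (msize_mdeg_ge szmu)) mulr0.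
Qed.

Lemma leq_exp_bounded (k r B : nat) :
  (forall t, 0 < t -> t ^ k <= B * t ^ r)%N -> (k <= r)%N.
Proof.
move=> bnd; rewrite leqNgt; apply/negP => ltrk.
have := bnd B.+1 isT; have := @leq_pexp2l B.+1 r.+1 k isT ltrk; rewrite expnS.
have : (0 < B.+1 ^ r)%N by rewrite expn_gt0.
by move: (B.+1 ^ r)%N (B.+1 ^ k)%N => X Y; nia.
Qed.

Section PrimeChain.
Variables (K : fieldType) (N : nat) (Q : pset {mpoly K[N]}) (k : nat).
Variables (c : nat -> pset {mpoly K[N]}) (A : {set 'I_N}).
Hypotheses (c_chain : prime_chain_over Q k c) (c0_vars : forall i, i \in A -> c 0%N 'X_i).

Lemma prime_chain_growth i : (i <= k)%N -> exists B, forall t m F,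
  lin_indep_mod (c i) m F -> (forall j, (j < m)%N -> (msize (F j) <= t)%N) ->
  (m * t ^ i <= B * t ^ #|~: A|)%N.
Proof.
case: c_chain => c_prime c_strict; elim: i => [_|i IH ltik].
  exists 1%N => t m F indF szF; rewrite expn0 muln1 mul1n.
  apply: lin_indep_mod_var_ideal_le indF szF => //.
  exact: prime_ideal_ideal (c_prime 0%N isT).1.
have [B bnd] := IH (ltnW ltik); have [sub [f [cf ncf]]] := c_strict i ltik.
set d := (msize f).-1; exists (B * d.+1 ^ #|~: A|)%N => t m F indF szF.
have [G [indG szG]] := lin_indep_mod_iter (c_prime i (ltnW ltik)).1
  (prime_ideal_ideal (c_prime i.+1 ltik).1) sub cf ncf indF szF t.
have szG' j : (j < t * m)%N -> (msize (G j) <= t * d.+1)%N.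
  by move/szG; rewrite mulnSr addnC.
have := bnd _ _ _ indG szG'; rewrite !expnMn expnS.
have : (0 < d.+1 ^ i)%N by rewrite expn_gt0.
by move: (t ^ i)%N (d.+1 ^ i)%N (t ^ #|~: A|)%N (d.+1 ^ #|~: A|)%N => ti di tr dr; nia.
Qed.

Lemma prime_chain_length_le : (k <= #|~: A|)%N.
Proof.
have [B bnd] := prime_chain_growth (leqnn k).
apply: (@leq_exp_bounded _ _ B) => t t_gt0; rewrite -[(t ^ k)%N]mul1n.
apply: bnd (lin_indep_mod_one _) _ => [|j _]; last by rewrite msize1.
by case: c_chain => /(_ k (leqnn k)) [].
Qed.

End PrimeChain.

Section Graph.
Variables (T : finType) (e : rel T).

Definition independentb (A : {set T}) :=
  [forall x, forall y, (x \in A) ==> (y \in A) ==> ~~ e x y].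

Lemma independentP A : reflect (independent e A) (independentb A).
Proof.
apply: (iffP forallP) => [indA x y xA yA|indA x].
  by move/forallP: (indA x) => /(_ y); rewrite xA yA.
by apply/forallP => y; apply/implyP => xA; apply/implyP => yA; apply: indA.
Qed.

Definition dominatingb D := [forall v, D :&: cnbhd e v != set0].

Lemma dominatingP D : reflect (dominating e D) (dominatingb D).
Proof. exact: (iffP forallP). Qed.

Lemma exists_maximal_independent : exists I, maximal_independent e I.
Proof.
have ind0 : independentb set0 by apply/independentP => x y; rewrite inE.
have [I /independentP indI maxI] := arg_maxnP (fun A : {set T} => #|A|) ind0.
exists I; split=> // B ltIB /independentP /maxI.
by rewrite /= leqNgt proper_card.
Qed.

Lemma dominating_minimal_sub D : dominating e D ->
  exists2 D' : {set T}, D' \subset D & minimal_dominating e D'.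
Proof.
move=> domD; have domD_sub : (D \subset D) && dominatingb D.
  by rewrite subxx; apply/dominatingP.
have [D' /andP [subD' /dominatingP domD'] minD'] :=
  @arg_minnP _ D (fun B => (B \subset D) && dominatingb B) (fun A => #|A|) domD_sub.
exists D' => //; split=> // B ltBD' /dominatingP domB.
have := minD' B; rewrite (subset_trans (proper_sub ltBD') subD') domB leqNgt.
by rewrite (proper_card ltBD') => /(_ isT).
Qed.

Hypothesis e_simple : simple_graph e.

Lemma maximal_independent_dominating I : maximal_independent e I -> dominating e I.
Proof.
case: e_simple => e_sym e_irr [indI maxI] v; apply/set0Pn.
have [vI|vI] := boolP (v \in I); first by exists v; rewrite !inE vI eqxx.
have /maxI/independentP : I \proper v |: I.
  by apply: properUr; rewrite sub1set.
rewrite negb_forall => /existsP [x]; rewrite negb_forall => /existsP [y].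
rewrite !negb_imply => /and3P [/setU1P [->|xI] /setU1P [->|yI] /andP [exy _]].
- by rewrite e_irr in exy.
- by exists y; rewrite !inE yI exy orbT.
- by exists x; rewrite !inE xI e_sym exy orbT.
- by rewrite (negbTE (indI x y xI yI)) in exy.
Qed.

Lemma maximal_independent_minimal_dominating I :
  maximal_independent e I -> minimal_dominating e I.
Proof.
move=> maxI; split; first exact: maximal_independent_dominating.
case: maxI => indI _ D' /properP [subD' [v vI vD']] /(_ v) /set0Pn [w].
rewrite !inE => /andP [wD' /orP [/eqP wv|evw]]; first by rewrite -wv wD' in vD'.
by move: (indI v w vI (subsetP subD' w wD')); rewrite evw.
Qed.

Lemma well_dominated_leq_dominating I D : well_dominated e ->
  maximal_independent e I -> dominating e D -> (#|I| <= #|D|)%N.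
Proof.
move=> wd maxI /dominating_minimal_sub [D' subD' minD'].
rewrite -(wd _ _ minD' (maximal_independent_minimal_dominating maxI)).
exact: subset_leq_card.
Qed.

End Graph.

Section ClosedNeighbourhoodIdeal.
Variables (K : fieldType) (T : finType) (e : rel T).
Local Notation S := {mpoly K[#|T|]}.

Lemma NI_var_ideal D p : dominating e D -> NI K e p -> var_ideal (enum_rank @: D) p.
Proof.
move=> domD [c ->]; rewrite /var_ideal /subst0 raddf_sum; apply: big1 => v _ /=.
have /set0Pn [w] := domD v; rewrite inE => /andP [wD wv].
rewrite rmorphM /= /cnbhd_monomial rmorph_prod (bigD1 w) //= -/(subst0 _ (vvar K w)).
by rewrite /vvar subst0_X mem_imset ?wD ?mul0r ?mulr0 //; apply: enum_rank_inj.
Qed.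

Lemma prime_over_NI_dominating (P : pset S) : is_prime_ideal P ->
  (forall p, NI K e p -> P p) ->
  exists2 D, dominating e D & forall w, w \in D -> P (vvar K w).
Proof.
move=> P_prime NI_P.
pose D := [set w | if excluded_middle_informative (P (vvar K w)) then true else false].
have DP w : w \in D -> P (vvar K w).
  by rewrite inE; case: excluded_middle_informative.
exists D => // v; apply/set0Pn.
have : P (cnbhd_monomial K e v).
  apply: NI_P; exists (fun u => if u == v then 1 else 0).
  rewrite (bigD1 v) //= eqxx mul1r big1 ?addr0 // => u /negbTE ->; exact: mul0r.
rewrite /cnbhd_monomial -big_enum => /(prime_ideal_prod P_prime) [w].
rewrite mem_enum => wv Pw; exists w; rewrite in_setI wv andbT inE.
by case: excluded_middle_informative.
Qed.

Lemma krull_dim_NI_ge D : dominating e D -> krull_dim_quot_ge (NI K e) #|~: D|.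
Proof.
move=> domD; set s := enum (~: D).
pose A j : {set 'I_#|T|} := enum_rank @: (D :|: [set x | x \in take j s]).
have memA j x : (enum_rank x \in A j) = (x \in D) || (x \in take j s).
  by rewrite mem_imset ?inE //; apply: enum_rank_inj.
exists (fun j => var_ideal (A j)); split=> [j _|j ltj].
  split=> [|p /(NI_var_ideal domD)]; first exact: var_ideal_prime.
  by apply: var_ideal_subset; rewrite imsetS ?subsetUl.
apply: var_ideal_proper; apply/properP; split.
  apply/subsetP => _ /imsetP [x + ->]; rewrite memA !inE => /orP [->//|].
  by rewrite -(take_takel _ (leqnSn j)) => /mem_take ->; rewrite orbT.
have szs : size s = #|~: D| by rewrite cardE.
have [x0 _] : exists x0, x0 \in ~: D by apply/card_gt0P; apply: leq_ltn_trans ltj.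
have take_y i : (i <= size s)%N -> (nth x0 s j \in take i s) = (j < i)%N.
  by move=> le_i; rewrite in_take_leq // index_uniq ?enum_uniq ?szs.
have yD : nth x0 s j \notin D by rewrite -in_setC -mem_enum mem_nth ?szs.
by exists (enum_rank (nth x0 s j));
  rewrite memA (negbTE yD) take_y ?szs ?(ltnW ltj) ?ltnn ?ltnSn.
Qed.

Lemma prime_chain_over_NI_le d k c : (forall D, dominating e D -> d <= #|D|)%N ->
  prime_chain_over (NI K e) k c -> (k + d <= #|T|)%N.
Proof.
move=> domd c_chain; have [/(_ 0%N isT) [c0_prime c0_NI] _] := c_chain.
have [D domD DP] := prime_over_NI_dominating c0_prime c0_NI.
have c0_vars i : i \in enum_rank @: D -> c 0%N 'X_i.
  by case/imsetP => w /DP wD ->.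
have := leq_add (domd D domD) (prime_chain_length_le c_chain c0_vars).
rewrite addnC => /leq_trans; apply.
by rewrite -(card_imset D enum_rank_inj) cardsC card_ord.
Qed.

End ClosedNeighbourhoodIdeal.

Local Close Scope ring_scope.

Theorem lemma4p3 (K : fieldType) (T : finType) (e : rel T) (n : nat) :
  infinite_field K ->
  simple_graph e ->
  very_well_covered e ->
  #|T| = (2 * n)%N ->
  krull_dim_quot_ge (NI K e) n /\
  (well_dominated e -> krull_dim_quot_eq (NI K e) n).
Proof.
move=> _ e_simple [_ vwc] cardT.
have [I maxI] := exists_maximal_independent e.
have cardI : #|I| = n by have := vwc I maxI; rewrite cardT; lia.
have dim_ge : krull_dim_quot_ge (NI K e) n.
  have -> : n = #|~: I| by have := cardsC I; rewrite cardI cardT; lia.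
  exact/krull_dim_NI_ge/(maximal_independent_dominating e_simple).
split=> // wd; split=> // k c chain.
have n_le_dom D : dominating e D -> n <= #|D|.
  by rewrite -cardI; apply: well_dominated_leq_dominating.
by have := prime_chain_over_NI_le n_le_dom chain; rewrite cardT; lia.
Qed.
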